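(* Let $\lambda,a\in\mathbb{R}^n$ with $\|\lambda\|=\|a\|=1$ and $d\in\mathbb{R}^m$ with $\|d\|\le1$. For $y\in\mathbb{R}^m$ let $\phi_\lambda(y)=\max_x\{\lambda^\mathsf{T} x:\|x\|\le\|y\|,\ a^\mathsf{T} x+d^\mathsf{T} y\le0\}$. Then $$\phi_\lambda(y)=\begin{cases}\|y\|, & \text{if } \lambda^\mathsf{T} a\,\|y\|+d^\mathsf{T} y\le0,\\ \sqrt{(\|y\|^2-(d^\mathsf{T} y)^2)(1-(\lambda^\mathsf{T} a)^2)}-d^\mathsf{T} y\,\lambda^\mathsf{T} a, & \text{otherwise.}\end{cases}$$ Furthermore, $\phi_\lambda$ is sublinear (convex and positively homogeneous), and: if $\|d\|=1$ and $m>1$, then $\phi_\lambda$ is differentiable on $\mathbb{R}^m\setminus d\mathbb{R}_+$; otherwise $\phi_\lambda$ is differentiable on $\mathbb{R}^m\setminus\{0\}$.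
   Context: $\|\cdot\|$ is the Euclidean norm; $d\mathbb{R}_+=\{td:t\ge0\}$. *)

From HB Require Import structures.
From mathcomp Require Import all_boot all_order all_algebra.
From mathcomp Require Import all_classical all_reals all_analysis.
Set Implicit Arguments. Unset Strict Implicit. Unset Printing Implicit Defensive.
Import Order.TTheory GRing.Theory Num.Theory.
Import numFieldNormedType.Exports.
Local Open Scope ring_scope.
Local Open Scope classical_set_scope.

Definition dotp (R : realType) (k : nat) (u v : 'rV[R]_k) : R :=
  \sum_(i < k) u 0 i * v 0 i.

Definition enorm (R : realType) (k : nat) (u : 'rV[R]_k) : R :=
  Num.sqrt (dotp u u).

Definition feasible (R : realType) (n m : nat) (a : 'rV[R]_n) (d y : 'rV[R]_m)
  (x : 'rV[R]_n) : Prop :=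
  enorm x <= enorm y /\ dotp a x + dotp d y <= 0.

(* phi_lambda(y) = max_x { lambda^T x : x feasible }, defined as the supremum;
   the theorem additionally asserts that the supremum is attained. *)
Definition phi (R : realType) (n m : nat) (lam a : 'rV[R]_n) (d : 'rV[R]_m)
  (y : 'rV[R]_m) : R :=
  sup [set dotp lam x | x in feasible a d y].

From HB Require Import structures.
From mathcomp Require Import all_boot all_order all_algebra.
From mathcomp Require Import all_classical all_reals all_analysis.
From mathcomp Require Import ring lra.
Import Order.TTheory GRing.Theory Num.Theory.
Import numFieldNormedType.Exports.
Local Open Scope ring_scope.
Local Open Scope classical_set_scope.
Set Implicit Arguments. Unset Strict Implicit.

(* Write alpha = lam^T a, beta = sqrt (1 - alpha^2), r = |y| and delta = d^T y.
   For x in the ball |x| <= r put s = a^T x; Cauchy-Schwarz on the orthogonal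
   complement of a gives lam^T x <= alpha s + beta sqrt (r^2 - s^2), a function of s
   that increases up to s = alpha r, where it reaches r.  Either this unconstrained
   maximiser satisfies s <= -delta, and the value r is attained at r lam, or the
   constraint is active and the value beta sqrt (r^2 - delta^2) - alpha delta is
   attained at s = -delta.

   The closed form divided by r is symmetric in (alpha, delta / r).  Hence phi y is
   r times the value of the same problem for the data lam' = (y / r, 0),
   a' = (d, sqrt (1 - |d|^2)), d' = alpha, y' = 1, that is phi y = max g^T y over a
   set of (g, gamma) that does not depend on y; as a maximum of linear functions
   phi is sublinear.

   Near a point with alpha r + delta <> 0, phi coincides with |y| or with the smooth
   branch; where alpha r + delta = 0 it is squeezed between the smooth branch and
   |y|, which touch there.  The smooth branch is differentiable wherever
   r^2 > delta^2.  For y <> 0 this can only fail when |d| = 1 and y lies on the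
   line through d; the half-line -d R_+ is outside the smooth region, and if m = 1
   the smooth branch is linear. *)

Section ArcMonotonicity.
Variable R : rcfType.

Lemma le_sqr_nonneg (x y : R) : 0 <= y -> x ^+ 2 <= y ^+ 2 -> x <= y.
Proof. by move=> y0 xy; have [x0|x0] := lerP x 0; nra. Qed.

(* The slope of s |-> al * s + be * sqrt (r^2 - s^2) at s = t is nonnegative. *)
Lemma arc_slope_ge0 (al be r t : R) : al ^+ 2 + be ^+ 2 = 1 -> 0 <= be -> 0 <= r ->
  t ^+ 2 <= r ^+ 2 -> t <= al * r -> be * t <= al * Num.sqrt (r ^+ 2 - t ^+ 2).
Proof.
move=> albe be0 r0 tr tal; set C := Num.sqrt _.
have C0 : 0 <= C := sqrtr_ge0 _.
have C2 : C ^+ 2 = r ^+ 2 - t ^+ 2 by rewrite sqr_sqrtr // subr_ge0.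
clearbody C.
have [al0|al0] := lerP 0 al.
  have [t0|t0] := lerP t 0; first by nra.
  apply: le_sqr_nonneg; first exact: mulr_ge0.
  have : t ^+ 2 <= (al * r) ^+ 2 by rewrite ler_sqr ?nnegrE ?(ltW t0) ?mulr_ge0.
  by rewrite !exprMn C2; nra.
have alr : al * r <= 0 by nra.
have alrt : (al * r) ^+ 2 <= t ^+ 2 by nra.
have : (al * C) ^+ 2 <= (be * t) ^+ 2 by rewrite !exprMn C2; nra.
rewrite -(sqrrN (al * C)) -(sqrrN (be * t)) => h.
by rewrite -lerN2; apply: (le_sqr_nonneg _ h); nra.
Qed.

Lemma arc_value_le (al be r s sg : R) : al ^+ 2 + be ^+ 2 = 1 -> 0 <= be -> 0 <= r ->
  s <= sg -> sg <= al * r -> s ^+ 2 <= r ^+ 2 -> sg ^+ 2 <= r ^+ 2 ->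
  al * s + be * Num.sqrt (r ^+ 2 - s ^+ 2) <= al * sg + be * Num.sqrt (r ^+ 2 - sg ^+ 2).
Proof.
move=> albe be0 r0 ssg sgr sr sgr2; set A := Num.sqrt _; set B := Num.sqrt _.
have A0 : 0 <= A := sqrtr_ge0 _.
have B0 : 0 <= B := sqrtr_ge0 _.
have A2 : A ^+ 2 = r ^+ 2 - s ^+ 2 by rewrite sqr_sqrtr // subr_ge0.
have B2 : B ^+ 2 = r ^+ 2 - sg ^+ 2 by rewrite sqr_sqrtr // subr_ge0.
have slopes : be * (s + sg) <= al * (A + B).
  by rewrite !mulrDr lerD ?arc_slope_ge0 // (le_trans ssg).
clearbody A B.
have E : (A + B) * (al * sg + be * B - (al * s + be * A))
         = (sg - s) * (al * (A + B) - be * (s + sg)).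
  have -> : (A + B) * (al * sg + be * B - (al * s + be * A))
          = al * (sg - s) * (A + B) + be * (B ^+ 2 - A ^+ 2) by ring.
  rewrite A2 B2; ring.
have [AB0|ABp] := eqVneq (A + B) 0.
  have [A0' B0'] : A = 0 /\ B = 0 by split; lra.
  move: A2 B2; rewrite A0' B0' !mulr0 !addr0 expr0n /= => A2 B2.
  have [<-|ssg'] := eqVneq s sg; first by [].
  have sgs : sg + s = 0.
    have : (sg - s) * (sg + s) = 0 by rewrite -subr_sqr; lra.
    by move/eqP; rewrite mulf_eq0 subr_eq0 eq_sym (negbTE ssg') => /eqP.
  have sgr' : sg = r by apply/eqP; rewrite -(eqrXn2 (n := 2)) //; [lra | lra].
  nra.
have : 0 <= (A + B) * (al * sg + be * B - (al * s + be * A)).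
  by rewrite E mulr_ge0 // subr_ge0.
by rewrite pmulr_rge0 ?subr_ge0 // lt_neqAle eq_sym ABp addr_ge0.
Qed.
End ArcMonotonicity.

Section DotProduct.
Variables (R : realType) (k : nat).
Implicit Types (u v w : 'rV[R]_k) (t : R).

Lemma dotpC u v : dotp u v = dotp v u.
Proof. by apply: eq_bigr => i _; rewrite mulrC. Qed.

Lemma dotpDl u v w : dotp (u + v) w = dotp u w + dotp v w.
Proof. by rewrite /dotp -big_split; apply: eq_bigr => i _; rewrite mxE mulrDl. Qed.

Lemma dotpDr u v w : dotp u (v + w) = dotp u v + dotp u w.
Proof. by rewrite dotpC dotpDl !(dotpC u). Qed.

Lemma dotpZl t u v : dotp (t *: u) v = t * dotp u v.
Proof. by rewrite /dotp mulr_sumr; apply: eq_bigr => i _; rewrite mxE mulrA. Qed.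

Lemma dotpZr t u v : dotp u (t *: v) = t * dotp u v.
Proof. by rewrite dotpC dotpZl dotpC. Qed.

Lemma dotpNl u v : dotp (- u) v = - dotp u v.
Proof. by rewrite -scaleN1r dotpZl mulN1r. Qed.

Lemma dotpNr u v : dotp u (- v) = - dotp u v.
Proof. by rewrite dotpC dotpNl dotpC. Qed.

Lemma dotpBl u v w : dotp (u - v) w = dotp u w - dotp v w.
Proof. by rewrite dotpDl dotpNl. Qed.

Lemma dotpBr u v w : dotp u (v - w) = dotp u v - dotp u w.
Proof. by rewrite dotpDr dotpNr. Qed.

Lemma dotp0r u : dotp u 0 = 0.
Proof. by rewrite /dotp big1 // => i _; rewrite mxE mulr0. Qed.

Lemma dotp0l u : dotp 0 u = 0.
Proof. by rewrite dotpC dotp0r. Qed.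

Definition dotpE := (dotpDl, dotpDr, dotpBl, dotpBr, dotpZl, dotpZr, dotpNl, dotpNr).

Lemma dotpp_ge0 u : 0 <= dotp u u.
Proof. by rewrite /dotp sumr_ge0 // => i _; rewrite -expr2 sqr_ge0. Qed.

Lemma dotpp_eq0 u : (dotp u u == 0) = (u == 0).
Proof.
apply/eqP/eqP => [uu0|->]; last by rewrite dotp0r.
apply/rowP => i; rewrite mxE; apply/eqP; rewrite -sqrf_eq0 expr2; apply/eqP.
by move: uu0 => /psumr_eq0P -> // j _; rewrite -expr2 sqr_ge0.
Qed.

Lemma enorm_sqr u : enorm u ^+ 2 = dotp u u.
Proof. by rewrite sqr_sqrtr ?dotpp_ge0. Qed.

Lemma dotpp_unit u : enorm u = 1 -> dotp u u = 1.
Proof. by move=> u1; rewrite -enorm_sqr u1 expr1n. Qed.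

Lemma enorm0 : enorm (0 : 'rV[R]_k) = 0.
Proof. by rewrite /enorm dotp0r sqrtr0. Qed.

Lemma enorm_ge0 u : 0 <= enorm u.
Proof. exact: sqrtr_ge0. Qed.

Lemma enorm_gt0 u : (0 < enorm u) = (u != 0).
Proof. by rewrite sqrtr_gt0 lt_def dotpp_ge0 dotpp_eq0 andbT. Qed.

Lemma enormN u : enorm (- u) = enorm u.
Proof. by rewrite /enorm dotpNl dotpNr opprK. Qed.

Lemma enormZ t u : 0 <= t -> enorm (t *: u) = t * enorm u.
Proof.
move=> t0; rewrite /enorm dotpZl dotpZr mulrA -expr2.
by rewrite sqrtrM ?sqr_ge0 // sqrtr_sqr ger0_norm.
Qed.

Lemma CauchySchwarz u v : dotp u v ^+ 2 <= dotp u u * dotp v v.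
Proof.
have [->|v0] := eqVneq v 0; first by rewrite !dotp0r expr0n mulr0.
have vv0 : 0 < dotp v v by rewrite lt_def dotpp_eq0 v0 dotpp_ge0.
have := dotpp_ge0 (dotp v v *: u - dotp u v *: v).
rewrite !dotpE (dotpC v u) => h.
rewrite -subr_ge0 -(pmulr_rge0 _ vv0); lra.
Qed.

Lemma dotp_le_enorm u v : dotp u v <= enorm u * enorm v.
Proof.
apply: le_sqr_nonneg; first by rewrite mulr_ge0 ?enorm_ge0.
by rewrite exprMn !enorm_sqr CauchySchwarz.
Qed.

Lemma dotp_sqr_le_enorm u v : enorm u <= 1 -> dotp u v ^+ 2 <= enorm v ^+ 2.
Proof.
move=> u1; have uu : dotp u u <= 1 by rewrite -enorm_sqr expr_le1 ?enorm_ge0.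
by apply: le_trans (CauchySchwarz u v) _; rewrite enorm_sqr ler_piMl ?dotpp_ge0.
Qed.

Lemma dotp_le_along (lam a x : 'rV[R]_k) :
  dotp lam lam = 1 -> dotp a a = 1 ->
  dotp lam x <= dotp lam a * dotp a x
                + Num.sqrt (1 - dotp lam a ^+ 2) * Num.sqrt (dotp x x - dotp a x ^+ 2).
Proof.
move=> ll aa; rewrite addrC -lerBlDr.
have -> : dotp lam x - dotp lam a * dotp a x = dotp (lam - dotp lam a *: a) (x - dotp a x *: a).
  by rewrite !dotpE aa; ring.
have -> : 1 - dotp lam a ^+ 2 = dotp (lam - dotp lam a *: a) (lam - dotp lam a *: a).
  by rewrite !dotpE aa ll (dotpC a lam); ring.
have -> : dotp x x - dotp a x ^+ 2 = dotp (x - dotp a x *: a) (x - dotp a x *: a).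
  by rewrite !dotpE aa (dotpC x a); ring.
exact: dotp_le_enorm.
Qed.

Lemma enorm_sqr_sub_gt0 (d y : 'rV[R]_k) : enorm d < 1 -> y != 0 ->
  0 < enorm y ^+ 2 - dotp d y ^+ 2.
Proof.
move=> d1 y0; have := CauchySchwarz d y; rewrite -!enorm_sqr subr_gt0.
have dd : enorm d ^+ 2 < 1 by rewrite expr_lt1 ?enorm_ge0.
have yy : 0 < enorm y ^+ 2 by rewrite exprn_gt0 ?enorm_gt0.
by move/le_lt_trans; apply; rewrite gtr_pMl.
Qed.

Lemma eq_scale_of_enorm_sqr (d y : 'rV[R]_k) : enorm d = 1 ->
  enorm y ^+ 2 = dotp d y ^+ 2 -> y = dotp d y *: d.
Proof.
move=> d1 yd; apply/eqP; rewrite -subr_eq0 -dotpp_eq0 !dotpE (dotpC y d) (dotpp_unit d1).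
by rewrite -enorm_sqr yd; apply/eqP; ring.
Qed.
End DotProduct.

Lemma dotp_row_mx (R : realType) (k l : nat) (u1 v1 : 'rV[R]_k) (u2 v2 : 'rV[R]_l) :
  dotp (row_mx u1 u2) (row_mx v1 v2) = dotp u1 v1 + dotp u2 v2.
Proof.
rewrite /dotp big_split_ord /=.
by congr (_ + _); apply: eq_bigr => i _; rewrite ?row_mxEl ?row_mxEr.
Qed.

Lemma dotp_rV1 (R : realType) (u v : 'rV[R]_1) : dotp u v = u 0 0 * v 0 0.
Proof. by rewrite /dotp big_ord1. Qed.

Lemma enorm_const_rV1 (R : realType) (c : R) : enorm (const_mx c : 'rV[R]_1) = `|c|.
Proof. by rewrite /enorm dotp_rV1 !mxE -expr2 sqrtr_sqr. Qed.

Lemma enorm_sqr_sub_dim1 (R : realType) (k : nat) (d y : 'rV[R]_k) :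
  (k <= 1)%N -> enorm d = 1 -> enorm y ^+ 2 - dotp d y ^+ 2 = 0.
Proof.
case: k d y => [|[|//]] d' y' _ d1.
  by rewrite /enorm /dotp !big_ord0 sqrtr0 expr0n /= subrr.
have dd := dotpp_unit d1; rewrite dotp_rV1 -expr2 in dd.
by rewrite enorm_sqr !dotp_rV1 -expr2 exprMn dd mul1r subrr.
Qed.

Section ClosedForm.
Variable R : rcfType.

Definition phi_formula (al r de : R) : R :=
  if al * r + de <= 0 then r
  else Num.sqrt ((r ^+ 2 - de ^+ 2) * (1 - al ^+ 2)) - de * al.

Lemma phi_formulaC (al de : R) : phi_formula al 1 de = phi_formula de 1 al.
Proof. by rewrite /phi_formula !mulr1 addrC mulrC expr1n [de * al]mulrC. Qed.

Lemma phi_formula0 (al : R) : phi_formula al 0 0 = 0.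
Proof. by rewrite /phi_formula mulr0 addr0 lexx. Qed.

Lemma phi_formulaZ (t al r de : R) : 0 < t ->
  phi_formula al (t * r) (t * de) = t * phi_formula al r de.
Proof.
move=> t0; rewrite /phi_formula mulrCA -mulrDr pmulr_rle0 //; case: ifP => // _.
rewrite !exprMn -mulrBr -[_ ^+ 2 * _ * _]mulrA sqrtrM ?sqr_ge0 // sqrtr_sqr gtr0_norm //.
ring.
Qed.

Lemma phi_formula_smooth (al r de : R) : al ^+ 2 <= 1 -> ~~ (al * r + de <= 0) ->
  phi_formula al r de = Num.sqrt (1 - al ^+ 2) * Num.sqrt (r ^+ 2 - de ^+ 2) - al * de.
Proof.
move=> al1 /negbTE cond; rewrite /phi_formula cond [_ * (1 - _)]mulrC.
by rewrite sqrtrM ?subr_ge0 // [de * al]mulrC.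
Qed.
End ClosedForm.

Section ValueFunction.
Variables (R : realType) (n m : nat) (lam a : 'rV[R]_n) (d : 'rV[R]_m).
Hypotheses (lam1 : enorm lam = 1) (a1 : enorm a = 1) (d1 : enorm d <= 1).

Local Notation alpha := (dotp lam a).
Local Notation beta := (Num.sqrt (1 - alpha ^+ 2)).

Lemma alpha_sqr_le1 : alpha ^+ 2 <= 1.
Proof. by have := CauchySchwarz lam a; rewrite !dotpp_unit // mulr1. Qed.

Lemma beta_alpha : alpha ^+ 2 + beta ^+ 2 = 1.
Proof. by rewrite sqr_sqrtr ?subr_ge0 ?alpha_sqr_le1 // addrC subrK. Qed.

Lemma phi_formula_ub y x : feasible a d y x ->
  dotp lam x <= phi_formula alpha (enorm y) (dotp d y).
Proof.
move=> [xy ax]; have [cond|cond] := boolP (alpha * enorm y + dotp d y <= 0).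
  rewrite /phi_formula cond.
  by apply: le_trans (dotp_le_enorm lam x) _; rewrite lam1 mul1r.
rewrite phi_formula_smooth ?alpha_sqr_le1 //; rewrite -ltNge in cond.
have sx : dotp a x ^+ 2 <= dotp x x by have := CauchySchwarz a x; rewrite dotpp_unit // mul1r.
have xy2 : dotp x x <= enorm y ^+ 2 by rewrite -enorm_sqr ler_sqr ?nnegrE ?enorm_ge0.
apply: le_trans (dotp_le_along x (dotpp_unit lam1) (dotpp_unit a1)) _.
apply: le_trans (_ : _ <= alpha * dotp a x + beta * Num.sqrt (enorm y ^+ 2 - dotp a x ^+ 2)) _.
  by rewrite lerD2l ler_wpM2l ?sqrtr_ge0 // ler_sqrt ?lerB // subr_ge0 (le_trans sx).
have arc := arc_value_le (s := dotp a x) (sg := - dotp d y) beta_alpha (sqrtr_ge0 _) (enorm_ge0 y).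
rewrite sqrrN in arc; apply: le_trans (arc _ _ _ _) _.
- lra.
- lra.
- exact: le_trans sx xy2.
- exact: dotp_sqr_le_enorm y d1.
- lra.
Qed.

Lemma phi_formula_attained y :
  exists2 x, feasible a d y x & dotp lam x = phi_formula alpha (enorm y) (dotp d y).
Proof.
have [cond|cond] := boolP (alpha * enorm y + dotp d y <= 0).
  exists (enorm y *: lam); last by rewrite /phi_formula cond dotpZr dotpp_unit // mulr1.
  split; first by rewrite enormZ ?enorm_ge0 // lam1 mulr1.
  by rewrite dotpZr dotpC mulrC.
rewrite phi_formula_smooth ?alpha_sqr_le1 //.
have aw : dotp a (lam - alpha *: a) = 0 by rewrite !dotpE dotpp_unit // dotpC mulr1 subrr.
have ww : dotp (lam - alpha *: a) (lam - alpha *: a) = 1 - alpha ^+ 2.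
  by rewrite !dotpE !dotpp_unit // (dotpC a lam); ring.
have lw : dotp lam (lam - alpha *: a) = 1 - alpha ^+ 2.
  by rewrite !dotpE dotpp_unit //; ring.
have b2 : beta ^+ 2 = 1 - alpha ^+ 2 by rewrite sqr_sqrtr ?subr_ge0 ?alpha_sqr_le1.
have N2 : Num.sqrt (enorm y ^+ 2 - dotp d y ^+ 2) ^+ 2 = enorm y ^+ 2 - dotp d y ^+ 2.
  by rewrite sqr_sqrtr // subr_ge0 (dotp_sqr_le_enorm y d1).
move: b2 N2 (dotp_sqr_le_enorm y d1).
move: (Num.sqrt (1 - alpha ^+ 2)) (Num.sqrt (enorm y ^+ 2 - dotp d y ^+ 2)) => b N b2 N2 dy.
move: (lam - alpha *: a) aw ww lw => w aw ww lw.
exists ((- dotp d y) *: a + (N / b) *: w).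
  split; last by rewrite dotpDr !dotpZr aw dotpp_unit //; lra.
  rewrite -(ler_sqr (enorm_ge0 _) (enorm_ge0 _)) !enorm_sqr.
  rewrite !(dotpDl, dotpDr, dotpZl, dotpZr) dotpp_unit // (dotpC w a) aw ww.
  rewrite -enorm_sqr -b2 (_ : _ + _ = dotp d y ^+ 2 + (N / b * b) ^+ 2); last by ring.
  by have [->|/divfK->] := eqVneq b 0; [rewrite mulr0 expr0n addr0 | rewrite N2 subrKC].
rewrite dotpDr !dotpZr lw -b2 (dotpC lam a).
by have [->|bn0] := eqVneq b 0; [rewrite invr0 !mulr0 !mul0r; ring | field].
Qed.

Lemma phiE y : phi lam a d y = phi_formula alpha (enorm y) (dotp d y).
Proof.
have [x fx lx] := phi_formula_attained y.
have ub : ubound [set dotp lam x | x in feasible a d y]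
                 (phi_formula alpha (enorm y) (dotp d y)).
  by move=> _ [z fz <-]; exact: phi_formula_ub.
apply/eqP; rewrite eq_le ge_sup //=; last by exists (dotp lam x), x.
by rewrite -lx ub_le_sup //; [exists (phi_formula alpha (enorm y) (dotp d y)) | exists x].
Qed.
End ValueFunction.

Section SupportFunction.
Variables (R : realType) (k : nat) (S : set 'rV[R]_k) (f : 'rV[R]_k -> R).
Hypotheses (f_ub : forall g y, S g -> dotp g y <= f y)
           (f_attained : forall y, exists2 g, S g & dotp g y = f y).

Lemma support_convex y z t : 0 <= t -> t <= 1 ->
  f (t *: y + (1 - t) *: z) <= t * f y + (1 - t) * f z.
Proof.
move=> t0 t1; have [g Sg <-] := f_attained (t *: y + (1 - t) *: z).
by rewrite dotpDr !dotpZr lerD // ler_wpM2l ?subr_ge0 ?f_ub.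
Qed.

Lemma support_homo y t : 0 < t -> f (t *: y) = t * f y.
Proof.
move=> t0; apply/eqP; rewrite eq_le; apply/andP; split.
  by have [g Sg <-] := f_attained (t *: y); rewrite dotpZr ler_pM2l ?f_ub.
by have [g Sg <-] := f_attained y; rewrite -dotpZr f_ub.
Qed.
End SupportFunction.

Section SelfDuality.
Variables (R : realType) (n m : nat) (lam a : 'rV[R]_n) (d : 'rV[R]_m).
Hypotheses (lam1 : enorm lam = 1) (a1 : enorm a = 1) (d1 : enorm d <= 1).

Local Notation alpha := (dotp lam a).
Local Notation phiF y := (phi_formula alpha (enorm y) (dotp d y)).
Local Notation a' := (row_mx d (const_mx (Num.sqrt (1 - dotp d d))) : 'rV[R]_(m + 1)).
Local Notation lift y := (row_mx ((enorm y)^-1 *: y) (0 : 'rV[R]_1)).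
Local Notation dual_feasible := (feasible a' (const_mx alpha : 'rV[R]_1) (const_mx 1)).

Lemma dual_normal_unit : enorm a' = 1.
Proof.
have dd : dotp d d <= 1 by rewrite -enorm_sqr expr_le1 ?enorm_ge0.
by rewrite /enorm dotp_row_mx dotp_rV1 !mxE -expr2 sqr_sqrtr ?subr_ge0 // subrKC sqrtr1.
Qed.

Lemma dual_data_le1 : enorm (const_mx alpha : 'rV[R]_1) <= 1.
Proof.
by rewrite enorm_const_rV1 -(expr_le1 (n := 2)) // real_normK ?num_real ?alpha_sqr_le1.
Qed.

Lemma lift_unit (y : 'rV[R]_m) : y != 0 -> enorm (lift y) = 1.
Proof.
move=> y0; have r0 : 0 < enorm y by rewrite enorm_gt0.
rewrite [LHS]/enorm dotp_row_mx dotp0l addr0 -[Num.sqrt _]/(enorm _).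
by rewrite enormZ ?invr_ge0 ?ltW // mulVf ?gt_eqF.
Qed.

Lemma dotp_lift (y : 'rV[R]_m) (x : 'rV[R]_(m + 1)) :
  dotp (lift y) x = (enorm y)^-1 * dotp (lsubmx x) y.
Proof. by rewrite -[x]hsubmxK dotp_row_mx dotp0l addr0 dotpZl row_mxKl dotpC. Qed.

Lemma lifted_phi_formula (y : 'rV[R]_m) : y != 0 ->
  phi_formula (dotp (lift y) a') (enorm (const_mx 1 : 'rV[R]_1))
              (dotp (const_mx alpha : 'rV[R]_1) (const_mx 1))
  = (enorm y)^-1 * phiF y.
Proof.
move=> y0; have r0 : 0 < enorm y by rewrite enorm_gt0.
have rn0 : enorm y != 0 by rewrite gt_eqF.
rewrite dotp_lift row_mxKl enorm_const_rV1 normr1 dotp_rV1 !mxE mulr1 phi_formulaC.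
have -> : phiF y = phi_formula alpha (enorm y * 1) (enorm y * ((enorm y)^-1 * dotp d y)).
  by rewrite mulr1 mulVKf.
by rewrite phi_formulaZ // mulKf.
Qed.

Lemma dual_ub (g y : 'rV[R]_m) : (lsubmx @` dual_feasible) g -> dotp g y <= phiF y.
Proof.
move=> [x fx <-]; have [->|y0] := eqVneq y 0.
  by rewrite dotp0r enorm0 dotp0r phi_formula0.
have := phi_formula_ub (lift_unit y0) dual_normal_unit dual_data_le1 fx.
by rewrite dotp_lift lifted_phi_formula // ler_pM2l // invr_gt0 enorm_gt0.
Qed.

Lemma dual_attained (y : 'rV[R]_m) :
  exists2 g, (lsubmx @` dual_feasible) g & dotp g y = phiF y.
Proof.
have [->|y0] := eqVneq y 0.
  exists (lsubmx (- a')); last by rewrite dotp0r enorm0 dotp0r phi_formula0.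
  exists (- a') => //; split; first by rewrite enormN dual_normal_unit enorm_const_rV1 normr1.
  have al1 : alpha <= 1 by have := alpha_sqr_le1 lam1 a1; nra.
  by rewrite dotpNr dotpp_unit ?dual_normal_unit // dotp_rV1 !mxE mulr1 addrC subr_le0.
have r0 : 0 < (enorm y)^-1 by rewrite invr_gt0 enorm_gt0.
have [x fx] := phi_formula_attained (lift_unit y0) dual_normal_unit dual_data_le1 (const_mx 1).
rewrite dotp_lift lifted_phi_formula // => /(mulfI (lt0r_neq0 r0)) xy.
by exists (lsubmx x); first exists x.
Qed.

Lemma phi_formula_convex (y z : 'rV[R]_m) t : 0 <= t -> t <= 1 ->
  phiF (t *: y + (1 - t) *: z) <= t * phiF y + (1 - t) * phiF z.
Proof. exact: support_convex dual_ub dual_attained y z t. Qed.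

Lemma phi_formula_homo (y : 'rV[R]_m) t : 0 < t -> phiF (t *: y) = t * phiF y.
Proof. exact: support_homo dual_ub dual_attained y t. Qed.
End SelfDuality.

Lemma norm_le_between (R : realDomainType) (a b c e : R) :
  a <= b <= c -> `|a| <= e -> `|c| <= e -> `|b| <= e.
Proof.
move=> /andP[ab bc]; rewrite !ler_norml => /andP[? ?] /andP[? ?].
by apply/andP; split; lra.
Qed.

Section DifferentiableSqueeze.
Variables (R : realType) (V : normedModType R).

Lemma diff_ge0_at_min (h : V -> R) (x v : V) : differentiable h x ->
  (\forall y \near x, h x <= h y) -> 0 <= 'd h x v.
Proof.
move=> dh hmin; rewrite -deriveE //.
have dv : derivable h x v := diff_derivable (v := v) dh.
rewrite /derive cvg_at_rightE //; apply: limr_ge.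
  apply/cvg_ex; exists ('D_v h x); apply: cvg_trans dv.
  by apply: cvg_app; apply: within_subset => t /= /lt0r_neq0.
have line : (fun t : R => t *: v + x) @ 0 --> x.
  suff : (fun t : R => t *: v + x) @ 0 --> 0 *: v + x by rewrite scale0r add0r.
  by apply: cvgD; [apply: cvgZl; exact: cvg_id | exact: cvg_cst].
near=> t.
have t0 : 0 <= t by apply: ltW; near: t; exact: nbhs_right_gt.
have ht : h x <= h (t *: v + x) by near: t; apply: cvg_within; exact: line hmin.
by rewrite mulr_ge0 ?invr_ge0 ?subr_ge0.
Unshelve. all: by end_near.
Qed.

Lemma diff_eq0_at_min (h : V -> R) (x : V) : differentiable h x ->
  (\forall y \near x, h x <= h y) -> 'd h x = 0 :> (V -> R).
Proof.
move=> dh hmin; apply/funext => v; apply/eqP; rewrite eq_le diff_ge0_at_min // andbT.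
by rewrite -oppr_ge0 -linearN diff_ge0_at_min.
Qed.

Lemma differentiable_squeeze (l f u : V -> R) (x : V) :
  differentiable l x -> differentiable u x -> l x = f x -> u x = f x ->
  (\forall y \near x, l y <= f y <= u y) -> differentiable f x.
Proof.
move=> dl du lx ux lfu.
have dul : 'd u x = 'd l x :> (V -> R).
  have d0 : 'd (u - l) x = 0 :> (V -> R).
    apply: diff_eq0_at_min; first exact: differentiableB.
    move: lfu; apply: filterS => y /andP[ly yu].
    by rewrite !fctE lx ux subrr subr_ge0 (le_trans ly).
  apply/funext => v; have := congr1 (fun g => g v) d0.
  by rewrite diffB //= => /eqP; rewrite subr_eq0 => /eqP.
have expand : f \o shift x = cst (f x) + 'd l x +o_ 0 id.
  have el := diff_locally dl; have eu := diff_locally du.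
  rewrite lx in el; rewrite dul ux in eu.
  apply/eqaddoP => e e0.
  move/eqaddoP/(_ e e0): el; move/eqaddoP/(_ e e0): eu.
  rewrite (near_shift 0 x) subr0 in lfu.
  move: lfu; apply: filterS3 => t /andP[lt tu] hu hl.
  by apply: norm_le_between hl hu; rewrite /= !lerD2r lt tu.
have dfl := diff_unique (diff_continuous dl) expand.
by apply/diff_locallyP; rewrite dfl; split; [exact: diff_continuous | exact: expand].
Qed.

Lemma differentiable_near_eq (f g : V -> R) (x : V) :
  differentiable g x -> (\forall y \near x, f y = g y) -> differentiable f x.
Proof.
move=> dg fg; have gf : g x = f x by rewrite (nbhs_singleton fg).
apply: (differentiable_squeeze dg dg gf gf).
by apply: filterS fg => y ->; rewrite lexx.
Qed.
End DifferentiableSqueeze.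

Section DotProductDifferentiable.
Variables (R : realType) (k : nat).

Lemma differentiable_dotp (v y : 'rV[R]_k) : differentiable (dotp v) y.
Proof.
have -> : dotp v = \sum_(i < k) (cst (v 0 i) * (fun z : 'rV[R]_k => z 0 i)).
  by apply/funext => z; rewrite fct_sumE.
apply: differentiable_sum => i.
by apply: differentiableM; [exact: differentiable_cst | exact: differentiable_coord].
Qed.

Lemma differentiable_dotpp (y : 'rV[R]_k) : differentiable (fun z => dotp z z) y.
Proof.
have -> : (fun z => dotp z z) = \sum_(i < k) ((fun z : 'rV[R]_k => z 0 i) * (fun z => z 0 i)).
  by apply/funext => z; rewrite fct_sumE.
by apply: differentiable_sum => i; apply: differentiableM; exact: differentiable_coord.
Qed.

Lemma differentiable_sqrt_comp (f : 'rV[R]_k -> R) (y : 'rV[R]_k) :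
  differentiable f y -> 0 < f y -> differentiable (fun z => Num.sqrt (f z)) y.
Proof.
move=> df fy0; apply: (differentiable_comp df).
have sqrt_derive := is_derive1_sqrt fy0.
by apply/derivable1_diffP; exact: ex_derive.
Qed.

Lemma differentiable_enorm (y : 'rV[R]_k) : y != 0 -> differentiable (@enorm R k) y.
Proof.
move=> y0; apply: (differentiable_sqrt_comp (differentiable_dotpp y)).
by rewrite lt_def dotpp_eq0 y0 dotpp_ge0.
Qed.
End DotProductDifferentiable.

Section Smoothness.
Variables (R : realType) (n m : nat) (lam a : 'rV[R]_n) (d : 'rV[R]_m).
Hypotheses (lam1 : enorm lam = 1) (a1 : enorm a = 1) (d1 : enorm d <= 1).

Local Notation alpha := (dotp lam a).
Local Notation beta := (Num.sqrt (1 - alpha ^+ 2)).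
Local Notation phiF := (fun y : 'rV[R]_m => phi_formula alpha (enorm y) (dotp d y)).
Local Notation Qd := (fun y : 'rV[R]_m => enorm y ^+ 2 - dotp d y ^+ 2).
Local Notation psi := (fun y : 'rV[R]_m => beta * Num.sqrt (Qd y) - alpha * dotp d y).

Lemma psi_le_enorm y : psi y <= enorm y.
Proof.
apply: le_sqr_nonneg (enorm_ge0 y) _.
have Q2 : Num.sqrt (Qd y) ^+ 2 = Qd y.
  by rewrite sqr_sqrtr // subr_ge0 (dotp_sqr_le_enorm y d1).
have := beta_alpha lam1 a1; have := sqr_ge0 (beta * dotp d y + alpha * Num.sqrt (Qd y)).
move: Q2; move: (Num.sqrt (Qd y)) beta => s b Q2 h b2.
have -> : enorm y ^+ 2 = (alpha ^+ 2 + b ^+ 2) * (Qd y + dotp d y ^+ 2) by rewrite b2; ring.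
rewrite -Q2; nra.
Qed.

Lemma psi_le_phiF y : psi y <= phiF y.
Proof.
have [c|c] := boolP (alpha * enorm y + dotp d y <= 0).
  by rewrite /= /phi_formula c psi_le_enorm.
by rewrite /= phi_formula_smooth ?alpha_sqr_le1.
Qed.

Lemma phiF_le_enorm y : phiF y <= enorm y.
Proof.
have [c|c] := boolP (alpha * enorm y + dotp d y <= 0); first by rewrite /= /phi_formula c.
by rewrite /= phi_formula_smooth ?alpha_sqr_le1 // psi_le_enorm.
Qed.

Lemma differentiable_Qd y : differentiable Qd y.
Proof.
have -> : Qd = (fun z => dotp z z) - dotp d * dotp d.
  by apply/funext => z; rewrite !fctE enorm_sqr expr2.
apply: differentiableB; first exact: differentiable_dotpp.
by apply: differentiableM; exact: differentiable_dotp.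
Qed.

Lemma differentiable_psi y : beta = 0 \/ 0 < Qd y \/ (forall z, Qd z = 0) ->
  differentiable psi y.
Proof.
move=> hyp; have -> : psi = (fun z => beta * Num.sqrt (Qd z)) - cst alpha * dotp d by [].
apply: differentiableB; last first.
  by apply: differentiableM; [exact: differentiable_cst | exact: differentiable_dotp].
case: hyp => [b0|[Qp|Q0]].
- by rewrite b0; under eq_fun do rewrite mul0r; exact: differentiable_cst.
- apply: differentiableM; first exact: differentiable_cst.
  exact: differentiable_sqrt_comp (differentiable_Qd y) Qp.
- by under eq_fun do rewrite Q0 sqrtr0 mulr0; exact: differentiable_cst.
Qed.

Lemma differentiable_phiF_boundary y : y != 0 -> alpha * enorm y + dotp d y = 0 ->
  differentiable phiF y.
Proof.
move=> y0 c; have de : dotp d y = - (alpha * enorm y) by lra.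
have Qy : Qd y = (beta * enorm y) ^+ 2.
  by rewrite /= de sqrrN !exprMn [beta ^+ 2]sqr_sqrtr ?subr_ge0 ?alpha_sqr_le1 //; ring.
have psiy : psi y = enorm y.
  rewrite /= Qy sqrtr_sqr ger0_norm ?mulr_ge0 ?sqrtr_ge0 ?enorm_ge0 //.
  by rewrite de mulrN opprK !mulrA -!expr2 -mulrDl addrC beta_alpha ?mul1r.
have phiy : phiF y = enorm y by rewrite /= /phi_formula c lexx.
apply: (differentiable_squeeze _ (differentiable_enorm y0) _ (esym phiy)).
- apply: differentiable_psi; have [->|bn0] := eqVneq beta 0; [by left | right; left].
  by rewrite Qy exprn_gt0 // mulr_gt0 ?enorm_gt0 // lt_def bn0 sqrtr_ge0.
- exact: etrans psiy (esym phiy).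
- by apply: (@nearW _ _ _ (nbhs_filter y)) => z; rewrite psi_le_phiF phiF_le_enorm.
Qed.

Lemma differentiable_phiF y : y != 0 ->
  (0 < alpha * enorm y + dotp d y -> 0 < Qd y \/ (forall z, Qd z = 0)) ->
  differentiable phiF y.
Proof.
move=> y0 hQ.
have du : differentiable (fun z => alpha * enorm z + dotp d z) y.
  apply: differentiableD; last exact: differentiable_dotp.
  by apply: differentiableM; [exact: differentiable_cst | exact: differentiable_enorm].
have cu := differentiable_continuous du.
case: (ltgtP (alpha * enorm y + dotp d y) 0) => c.
- apply: (differentiable_near_eq (differentiable_enorm y0)).
  apply: filterS (@cvgr_lt _ _ _ (nbhs_filter y) _ _ cu 0 c) => z /ltW zc.
  by rewrite /= /phi_formula zc.
- apply: (differentiable_near_eq (differentiable_psi (or_intror (hQ c)))).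
  apply: filterS (@cvgr_gt _ _ _ (nbhs_filter y) _ _ cu 0 c) => z zc.
  by rewrite /= phi_formula_smooth ?alpha_sqr_le1 // -ltNge.
- exact: differentiable_phiF_boundary.
Qed.

Lemma differentiable_phiF_off_ray y : enorm d = 1 ->
  ~ (exists t, 0 <= t /\ y = t *: d) -> differentiable phiF y.
Proof.
move=> dn1 off_ray.
have y0 : y != 0 by apply/eqP => y0; apply: off_ray; exists 0; rewrite scale0r.
apply: (differentiable_phiF y0) => c; left.
rewrite lt_def subr_ge0 (dotp_sqr_le_enorm y d1) andbT.
apply/negP => /eqP /subr0_eq yd; apply: off_ray; exists (dotp d y).
split; last exact: eq_scale_of_enorm_sqr.
have al1 : alpha <= 1 by have := alpha_sqr_le1 lam1 a1; nra.
have r0 := enorm_ge0 y.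
move: yd c; move: (enorm y) (dotp d y) r0 => r de r0 yd c.
rewrite leNgt; apply/negP => de0.
have der : - de = r.
  have nde0 : 0 <= - de by rewrite oppr_ge0 ltW.
  by apply/eqP; rewrite -(eqrXn2 (n := 2) _ nde0 r0) // sqrrN yd.
have : (alpha - 1) * r <= 0 by rewrite mulr_le0_ge0 // subr_le0.
lra.
Qed.

Lemma differentiable_phiF_nonzero y : ~~ ((enorm d == 1) && (1 < m)%N) -> y != 0 ->
  differentiable phiF y.
Proof.
move=> small y0; apply: (differentiable_phiF y0) => _.
have [dn1|dn1] := eqVneq (enorm d) 1.
  right => z; apply: (enorm_sqr_sub_dim1 z _ dn1).
  by move: small; rewrite dn1 eqxx andTb -leqNgt.
by left; apply: (enorm_sqr_sub_gt0 _ y0); rewrite lt_neqAle dn1.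
Qed.
End Smoothness.

Unset Implicit Arguments.
Theorem proposition5 (R : realType) (n m : nat) (lam a : 'rV[R]_n) (d : 'rV[R]_m) :
  enorm lam = 1 -> enorm a = 1 -> enorm d <= 1 ->
  (* the maximum is attained and given by the closed formula *)
  (forall y : 'rV[R]_m,
     (exists x, feasible a d y x /\ dotp lam x = phi lam a d y) /\
     (forall x, feasible a d y x -> dotp lam x <= phi lam a d y) /\
     phi lam a d y =
       (if dotp lam a * enorm y + dotp d y <= 0 then enorm y
        else Num.sqrt ((enorm y ^+ 2 - (dotp d y) ^+ 2) * (1 - (dotp lam a) ^+ 2))
             - dotp d y * dotp lam a)) /\
  (* convexity *)
  (forall (y z : 'rV[R]_m) (t : R), 0 <= t -> t <= 1 ->
     phi lam a d (t *: y + (1 - t) *: z)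
       <= t * phi lam a d y + (1 - t) * phi lam a d z) /\
  (* positive homogeneity *)
  (forall (y : 'rV[R]_m) (t : R), 0 < t -> phi lam a d (t *: y) = t * phi lam a d y) /\
  (* differentiability *)
  (if (enorm d == 1) && (1 < m)%N then
     forall y : 'rV[R]_m, ~ (exists t : R, 0 <= t /\ y = t *: d) ->
       differentiable (phi lam a d) y
   else
     forall y : 'rV[R]_m, y != 0 -> differentiable (phi lam a d) y).
Proof.
move=> lam1 a1 d1.
have -> : phi lam a d = fun y => phi_formula (dotp lam a) (enorm y) (dotp d y).
  by apply/funext => y; exact: phiE.
split.
  move=> y; have [x fx lx] := phi_formula_attained lam1 a1 d1 y.
  by do !split; [exists x | exact: phi_formula_ub].
split; first exact: phi_formula_convex.
split; first exact: phi_formula_homo.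
case: ifPn => [/andP[/eqP dn1 _]|small] y.
  exact: differentiable_phiF_off_ray.
exact: differentiable_phiF_nonzero.
Qed.
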